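(* Let $Y$ be a Hausdorff space and $g:[0,1]\to Y$ a continuous surjection. The following are equivalent: (a) $g$ is arcwise increasing; (b) $g$ is hereditarily irreducible; (c) $g$ is strongly irreducible; (d) $g$ is almost injective.
   Context: For a continuous map $g:X\to Y$ between continua: $g$ is almost injective if $\{x: g^{-1}(g(x))=\{x\}\}$ is dense in $X$; irreducible if $g(K)\subsetneq g(X)$ for every proper subcontinuum $K\subsetneq X$; hereditarily irreducible if $g(A)\subsetneq g(B)$ for all subcontinua $A\subsetneq B$ of $X$; strongly irreducible if $g(A)\subsetneq g(X)$ for every closed $A\subsetneq X$; arcwise increasing if $g(A)\subsetneq g(B)$ for all arcs $A\subsetneq B$ in $X$. *)

From Stdlib Require Import Reals List.
Open Scope R_scope.

Definition subset {X : Type} (A B : X -> Prop) : Prop := forall x, A x -> B x.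
Definition psubset {X : Type} (A B : X -> Prop) : Prop :=
  subset A B /\ exists x, B x /\ ~ A x.
Definition image {X Y : Type} (f : X -> Y) (A : X -> Prop) : Y -> Prop :=
  fun y => exists x, A x /\ f x = y.
Definition fullset {X : Type} : X -> Prop := fun _ => True.

Definition is_topology {X : Type} (op : (X -> Prop) -> Prop) : Prop :=
  op (fun _ => True) /\
  (forall U V, op U -> op V -> op (fun x => U x /\ V x)) /\
  (forall F : (X -> Prop) -> Prop, (forall U, F U -> op U) ->
     op (fun x => exists U, F U /\ U x)).

Definition Hausdorff {X : Type} (op : (X -> Prop) -> Prop) : Prop :=
  forall x y, x <> y -> exists U V, op U /\ op V /\ U x /\ V y /\
    (forall z, ~ (U z /\ V z)).

Definition continuous {X Y : Type} (opX : (X -> Prop) -> Prop)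
  (opY : (Y -> Prop) -> Prop) (f : X -> Y) : Prop :=
  forall V, opY V -> opX (fun x => V (f x)).

Definition closed {X : Type} (op : (X -> Prop) -> Prop) (A : X -> Prop) : Prop :=
  op (fun x => ~ A x).

Definition dense {X : Type} (op : (X -> Prop) -> Prop) (D : X -> Prop) : Prop :=
  forall U, op U -> (exists x, U x) -> exists x, U x /\ D x.

Definition compact {X : Type} (op : (X -> Prop) -> Prop) (A : X -> Prop) : Prop :=
  forall F : (X -> Prop) -> Prop, (forall U, F U -> op U) ->
    subset A (fun x => exists U, F U /\ U x) ->
    exists l : list (X -> Prop), (forall U, In U l -> F U) /\
      subset A (fun x => exists U, In U l /\ U x).

Definition connected {X : Type} (op : (X -> Prop) -> Prop) (A : X -> Prop) : Prop :=
  ~ exists U V, op U /\ op V /\ subset A (fun x => U x \/ V x) /\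
      (forall x, A x -> U x -> V x -> False) /\
      (exists x, A x /\ U x) /\ (exists x, A x /\ V x).

Definition subcontinuum {X : Type} (op : (X -> Prop) -> Prop) (A : X -> Prop) : Prop :=
  (exists x, A x) /\ compact op A /\ connected op A.

Definition I01 : Type := { x : R | 0 <= x <= 1 }.
Definition I01_open (U : I01 -> Prop) : Prop :=
  forall x, U x -> exists eps, eps > 0 /\
    forall y : I01, Rabs (proj1_sig y - proj1_sig x) < eps -> U y.

(* an arc: a subset homeomorphic to [0,1] (h is a homeomorphism onto A,
   A carrying the subspace topology) *)
Definition arc {X : Type} (op : (X -> Prop) -> Prop) (A : X -> Prop) : Prop :=
  exists h : I01 -> X,
    continuous I01_open op h /\
    (forall s t, h s = h t -> s = t) /\
    (forall y, A y <-> exists t, h t = y) /\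
    (forall U, I01_open U -> exists V, op V /\
        forall y, (A y /\ V y) <-> exists t, U t /\ h t = y).

Definition almost_injective {X Y : Type} (opX : (X -> Prop) -> Prop) (g : X -> Y) : Prop :=
  dense opX (fun x => forall x', g x' = g x -> x' = x).

Definition hereditarily_irreducible {X Y : Type} (opX : (X -> Prop) -> Prop)
  (g : X -> Y) : Prop :=
  forall A B, subcontinuum opX A -> subcontinuum opX B -> psubset A B ->
    psubset (image g A) (image g B).

Definition strongly_irreducible {X Y : Type} (opX : (X -> Prop) -> Prop)
  (g : X -> Y) : Prop :=
  forall A, closed opX A -> psubset A fullset ->
    psubset (image g A) (image g fullset).

Definition arcwise_increasing {X Y : Type} (opX : (X -> Prop) -> Prop)
  (g : X -> Y) : Prop :=
  forall A B, arc opX A -> arc opX B -> psubset A B ->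
    psubset (image g A) (image g B).

From Stdlib Require Import Reals List Lra Lia Classical ClassicalEpsilon
  FunctionalExtensionality PropExtensionality.
Open Scope R_scope.

Ltac destruct_minmax := unfold Rmax, Rmin in *;
  repeat match goal with
  | |- context [Rle_dec ?a ?b] => destruct (Rle_dec a b)
  | H : context [Rle_dec ?a ?b] |- _ => destruct (Rle_dec a b)
  end.

Lemma pred_ext {X : Type} (P Q : X -> Prop) : (forall x, P x <-> Q x) -> P = Q.
Proof.
  intro H. apply functional_extensionality; intro x.
  apply propositional_extensionality; auto.
Qed.

(* In a Hausdorff space compact sets are closed: each point outside A is
   separated from A by finitely many of the Hausdorff neighbourhoods. *)
Lemma compact_closed {X : Type} (op : (X -> Prop) -> Prop) :
  is_topology op -> Hausdorff op -> forall A, compact op A -> closed op A.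
Proof.
  intros [Htop [Hinter Hunion]] HH A HA. unfold closed.
  replace (fun x => ~ A x)
    with (fun x => exists W, (op W /\ forall z, W z -> ~ A z) /\ W x).
  2:{ apply pred_ext; intro x; split.
      - intros [W [[_ HW] Wx]]. exact (HW x Wx).
      - intro nAx.
        set (F := fun U => op U /\ exists V, op V /\ V x /\ forall z, ~ (U z /\ V z)).
        destruct (HA F) as [l [Hl Hcov]].
        + intros U [HU _]; exact HU.
        + intros a Aa. assert (Hax : a <> x) by (intro; subst; contradiction).
          destruct (HH a x Hax) as [U [V [HU [HV [Ua [Vx Hd]]]]]].
          exists U; split; [split; [exact HU | exists V; auto] | exact Ua].
        + assert (Hsep : exists W, op W /\ W x /\
                   forall U, In U l -> forall z, ~ (U z /\ W z)).
          { clear Hcov. induction l as [|U l IH].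
            - exists (fun _ => True).
              split; [exact Htop | split; [exact I | intros U []]].
            - destruct IH as [W [HW [Wx HWd]]].
              { intros U' HU'; apply Hl; right; auto. }
              destruct (Hl U (or_introl eq_refl)) as [_ [V [HV [Vx HVd]]]].
              exists (fun z => W z /\ V z).
              split; [apply Hinter; auto | split; [auto |]].
              intros U' [<- | HU'] z [H1 [H2 H3]].
              + apply (HVd z); auto.
              + apply (HWd U' HU' z); auto. }
          destruct Hsep as [W [HW [Wx HWd]]].
          exists W; split; [split; [exact HW |] | exact Wx].
          intros z Wz Az. destruct (Hcov z Az) as [U [HU Uz]].
          apply (HWd U HU z); auto. }
  apply Hunion. intros W [HW _]; exact HW.
Qed.

Lemma compact_image {X Y : Type} (opX : (X -> Prop) -> Prop)
  (opY : (Y -> Prop) -> Prop) (f : X -> Y) (A : X -> Prop) :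
  continuous opX opY f -> compact opX A -> compact opY (image f A).
Proof.
  intros Hf HA F HF Hcov.
  set (G := fun W : X -> Prop => exists U, F U /\ W = (fun x => U (f x))).
  destruct (HA G) as [l [Hl Hlcov]].
  - intros W [U [HU ->]]. apply Hf, HF, HU.
  - intros x Ax. destruct (Hcov (f x)) as [U [HU Ux]]; [exists x; auto |].
    exists (fun x => U (f x)); split; [exists U; auto | exact Ux].
  - assert (Hpush : exists l', (forall U, In U l' -> F U) /\
        forall W, In W l -> forall x, W x -> exists U, In U l' /\ U (f x)).
    { clear Hlcov. induction l as [|W l IH].
      - exists nil; split; [intros U [] | intros W []].
      - destruct IH as [l' [H1 H2]]; [intros U HU; apply Hl; right; auto |].
        destruct (Hl W (or_introl eq_refl)) as [U [HU EW]].
        exists (U :: l'); split.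
        + intros U' [<- | HU']; auto.
        + intros W' [<- | HW'] x Wx.
          * exists U; split; [left; auto | rewrite EW in Wx; exact Wx].
          * destruct (H2 W' HW' x Wx) as [U' [? ?]].
            exists U'; split; [right |]; auto. }
    destruct Hpush as [l' [H1 H2]]. exists l'; split; auto.
    intros y [x [Ax <-]]. destruct (Hlcov x Ax) as [W [HW Wx]]. eauto.
Qed.

Lemma connected_image {X Y : Type} (opX : (X -> Prop) -> Prop)
  (opY : (Y -> Prop) -> Prop) (f : X -> Y) :
  connected opX (@fullset X) -> continuous opX opY f ->
  connected opY (image f fullset).
Proof.
  intros HX Hf [U [V [HU [HV [Hc [Hd [[y1 [[t1 [_ E1]] U1]] [y2 [[t2 [_ E2]] V2]]]]]]]]].
  apply HX. exists (fun t => U (f t)), (fun t => V (f t)).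
  split; [apply Hf; auto | split; [apply Hf; auto |]].
  split; [intros t _; apply Hc; exists t; split; [exact I | auto] |].
  split; [intros t _; apply Hd; exists t; split; [exact I | auto] |].
  subst; split; [exists t1 | exists t2]; split; auto; exact I.
Qed.

Lemma closed_preimage {X Y : Type} (opX : (X -> Prop) -> Prop)
  (opY : (Y -> Prop) -> Prop) (f : X -> Y) (B : Y -> Prop) :
  continuous opX opY f -> closed opY B -> closed opX (fun x => B (f x)).
Proof. intros Hf HB. exact (Hf _ HB). Qed.

Lemma I01_eq (s t : I01) : proj1_sig s = proj1_sig t -> s = t.
Proof.
  destruct s as [s Hs], t as [t Ht]; simpl; intro E; subst.
  f_equal; apply proof_irrelevance.
Qed.

Definition mk (r : R) (H : 0 <= r <= 1) : I01 := exist _ r H.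

Lemma I01_topology : is_topology I01_open.
Proof.
  split; [| split].
  - intros x _. exists 1; split; [lra | auto].
  - intros U V HU HV x [Ux Vx].
    destruct (HU x Ux) as [e1 [He1 H1]], (HV x Vx) as [e2 [He2 H2]].
    exists (Rmin e1 e2); split; [apply Rmin_glb_lt; auto |].
    intros y Hy; split; [apply H1 | apply H2]; eapply Rlt_le_trans; eauto;
      [apply Rmin_l | apply Rmin_r].
  - intros F HF x [U [FU Ux]]. destruct (HF U FU x Ux) as [e [He H]].
    exists e; split; auto. intros y Hy; exists U; auto.
Qed.

Lemma ball_open (x : I01) (r : R) :
  I01_open (fun y => Rabs (proj1_sig y - proj1_sig x) < r).
Proof.
  intros z Hz. exists (r - Rabs (proj1_sig z - proj1_sig x)); split; [lra |].
  intros y Hy. revert Hz Hy. split_Rabs; lra.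
Qed.

Lemma I01_Hausdorff : Hausdorff I01_open.
Proof.
  intros x y Hxy.
  assert (proj1_sig x <> proj1_sig y) by (intro E; apply Hxy, I01_eq, E).
  set (d := Rabs (proj1_sig x - proj1_sig y) / 2).
  assert (Hd : 0 < d) by (unfold d; split_Rabs; lra).
  exists (fun z => Rabs (proj1_sig z - proj1_sig x) < d),
         (fun z => Rabs (proj1_sig z - proj1_sig y) < d).
  split; [apply ball_open | split; [apply ball_open |]].
  rewrite !Rminus_diag, !Rabs_R0. split; [auto | split; [auto |]].
  intros z [H1 H2]. unfold d in *. revert H1 H2. split_Rabs; lra.
Qed.

Lemma closed_outside_interval (c d : R) :
  closed I01_open (fun t => ~ (c < proj1_sig t < d)).
Proof.
  unfold closed.
  replace (fun t : I01 => ~ ~ (c < proj1_sig t < d))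
    with (fun t : I01 => c < proj1_sig t < d)
    by (apply pred_ext; intro t; split; [auto | apply NNPP]).
  intros t Ht. exists (Rmin (proj1_sig t - c) (d - proj1_sig t)).
  split; [apply Rmin_glb_lt; lra |].
  intros y Hy. revert Hy. destruct_minmax; split_Rabs; lra.
Qed.

Lemma closed_right_part (A : I01 -> Prop) (c : R) :
  closed I01_open A -> closed I01_open (fun t => A t /\ c <= proj1_sig t).
Proof.
  intros HA t Ht. destruct (classic (A t)) as [At | Nt].
  - assert (proj1_sig t < c) by (apply Rnot_le_gt; intro; apply Ht; auto).
    exists (c - proj1_sig t); split; [lra |].
    intros y Hy [_ Hy2]. revert Hy; split_Rabs; lra.
  - destruct (HA t Nt) as [e [He HE]]. exists e; split; auto.
    intros y Hy [Ay _]. exact (HE y Hy Ay).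
Qed.

Lemma interval_in_open (U : I01 -> Prop) (t : I01) (c d eps : R) :
  I01_open U -> U t -> c < proj1_sig t < d -> 0 < eps ->
  exists c' d', 0 <= c' /\ c <= c' /\ c' < d' /\ d' <= d /\ d' <= 1 /\
    d' - c' <= eps /\ forall s : I01, c' <= proj1_sig s <= d' -> U s.
Proof.
  intros HU Ut Ht Heps. destruct (HU t Ut) as [e [He HE]].
  pose proof (proj2_sig t) as Ht01.
  set (r := Rmin (e / 2) (eps / 2)).
  assert (Hr : 0 < r /\ r < e /\ 2 * r <= eps) by (unfold r; destruct_minmax; lra).
  exists (Rmax (Rmax c 0) (proj1_sig t - r)), (Rmin (Rmin d 1) (proj1_sig t + r)).
  destruct_minmax; repeat split; try lra;
    intros s Hs; apply HE; split_Rabs; lra.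
Qed.

Lemma exists_near_lub (S : R -> Prop) (s e : R) :
  is_lub S s -> 0 < e -> exists t, S t /\ t > s - e.
Proof.
  intros [Hub Hl] He. apply NNPP; intro N.
  assert (s <= s - e); [| lra]. apply Hl. intros t St.
  apply Rnot_lt_le. intro. apply N. exists t; split; auto.
Qed.

(* Around any point s of [0,1], a closed set A covered by an open family F is
   covered by at most one member of F (one containing s if s is in A, none
   otherwise, using a ball around s missing A). *)
Lemma closed_local_cover (A : I01 -> Prop) (F : (I01 -> Prop) -> Prop) (s : I01) :
  closed I01_open A -> (forall U, F U -> I01_open U) ->
  subset A (fun x => exists U, F U /\ U x) ->
  exists e, 0 < e /\ exists l, (forall U, In U l -> F U) /\
    forall x : I01, A x -> Rabs (proj1_sig x - proj1_sig s) < e ->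
      exists U, In U l /\ U x.
Proof.
  intros HA HF Hcov. destruct (classic (A s)) as [As | Nas].
  - destruct (Hcov _ As) as [U [FU Us]]. destruct (HF U FU _ Us) as [e [He HU]].
    exists e; split; auto. exists (U :: nil); split; [intros U' [<- | []]; auto |].
    intros x Ax Hx. exists U; split; [left; auto | apply HU; exact Hx].
  - destruct (HA _ Nas) as [e [He HU]]. exists e; split; auto.
    exists nil; split; [intros U [] |].
    intros x Ax Hx. exfalso. apply (HU x Hx Ax).
Qed.

(* The supremum s of the
   points t such that A \cap [0,t] is finitely covered is 1 and is attained,
   since a local cover around s extends any cover up to a point near s. *)
Lemma heine_borel (A : I01 -> Prop) : closed I01_open A -> compact I01_open A.
Proof.
  intros HA F HF Hcov.
  set (S := fun t => 0 <= t <= 1 /\ exists l, (forall U, In U l -> F U) /\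
       forall x : I01, A x -> proj1_sig x <= t -> exists U, In U l /\ U x).
  assert (H0 : 0 <= 0 <= 1) by lra.
  assert (S0 : S 0).
  { split; [lra |].
    destruct (closed_local_cover A F (mk 0 H0) HA HF Hcov) as [e [He [l [Hl Hc]]]].
    exists l; split; auto. intros x Ax Hx. apply Hc; auto.
    simpl. pose proof (proj2_sig x). split_Rabs; lra. }
  destruct (completeness S) as [s Hs];
    [exists 1; intros t [? _]; lra | exists 0; auto |].
  assert (Hs01 : 0 <= s <= 1).
  { destruct Hs as [Hub Hl]. split; [apply Hub; auto |].
    apply Hl. intros t [? _]; lra. }
  destruct (closed_local_cover A F (mk s Hs01) HA HF Hcov)
    as [e [He [l0 [Hl0 Hc0]]]].
  destruct (exists_near_lub S s e Hs He) as [t [[Ht [l [Hl Hc]]] Hts]].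
  assert (Sm : S (Rmin (s + e / 2) 1)).
  { split; [destruct_minmax; lra |].
    exists (l0 ++ l); split.
    - intros U HU. apply in_app_or in HU. destruct HU; auto.
    - intros x Ax Hx. destruct (Rle_lt_dec (proj1_sig x) t) as [Hxt | Hxt].
      + destruct (Hc x Ax Hxt) as [U [? ?]].
        exists U; split; auto. apply in_or_app; auto.
      + assert (Hnear : Rabs (proj1_sig x - s) < e)
          by (revert Hx; destruct_minmax; split_Rabs; lra).
        destruct (Hc0 x Ax Hnear) as [U [? ?]].
        exists U; split; auto. apply in_or_app; auto. }
  assert (Hm : Rmin (s + e / 2) 1 <= s) by (apply (proj1 Hs); exact Sm).
  replace (Rmin (s + e / 2) 1) with 1 in Sm by (revert Hm; destruct_minmax; lra).
  destruct Sm as [_ [l' [Hl' Hc']]]. exists l'; split; auto.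
  intros x Ax. apply Hc'; auto. apply (proj2_sig x).
Qed.

(* No separation (U,V) of [0,1] can have a point of U left of a point of V:
   the supremum of the initial segment of [u,v] lying in U is in neither. *)
Lemma I01_no_separation (U V : I01 -> Prop) (u v : I01) :
  I01_open U -> I01_open V -> (forall x, U x \/ V x) ->
  (forall x, U x -> V x -> False) -> U u -> V v ->
  proj1_sig u < proj1_sig v -> False.
Proof.
  intros HU HV Hc Hd Uu Vv Huv.
  set (S := fun t => proj1_sig u <= t <= proj1_sig v /\
    forall x : I01, proj1_sig u <= proj1_sig x <= t -> U x).
  assert (Su : S (proj1_sig u)).
  { split; [lra |]. intros x Hx. replace x with u; auto. apply I01_eq; lra. }
  destruct (completeness S) as [s Hs];
    [exists (proj1_sig v); intros t [? _]; lra | eauto |].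
  pose proof (proj2_sig u); pose proof (proj2_sig v).
  assert (Hsb : proj1_sig u <= s <= proj1_sig v).
  { destruct Hs as [Hub Hl]. split; [apply Hub, Su |]. apply Hl. intros t [? _]; lra. }
  assert (Hs01 : 0 <= s <= 1) by lra.
  assert (Hbelow : forall x : I01, proj1_sig u <= proj1_sig x < s -> U x).
  { intros x Hx.
    destruct (exists_near_lub S s (s - proj1_sig x) Hs) as [t [[_ Ht] Hts]]; [lra |].
    apply Ht; lra. }
  destruct (Hc (mk s Hs01)) as [Us | Vs].
  - assert (s < proj1_sig v).
    { destruct (Rle_lt_dec (proj1_sig v) s); auto. exfalso. apply (Hd v); auto.
      replace v with (mk s Hs01); auto. apply I01_eq; simpl; lra. }
    destruct (HU _ Us) as [e [He HE]]. simpl in HE.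
    assert (St : S (Rmin (s + e / 2) (proj1_sig v))).
    { split; [destruct_minmax; lra |].
      intros x Hx. destruct (Rlt_le_dec (proj1_sig x) s).
      - apply Hbelow; lra.
      - apply HE. revert Hx; destruct_minmax; split_Rabs; lra. }
    pose proof (proj1 Hs _ St). destruct_minmax; lra.
  - assert (proj1_sig u < s).
    { destruct (Rle_lt_dec s (proj1_sig u)); auto. exfalso. apply (Hd u); auto.
      replace u with (mk s Hs01); auto. apply I01_eq; simpl; lra. }
    destruct (HV _ Vs) as [e [He HE]]. simpl in HE.
    set (r := Rmax (s - e / 2) (proj1_sig u)).
    assert (Hr : 0 <= r <= 1) by (unfold r; destruct_minmax; lra).
    apply (Hd (mk r Hr)).
    + apply Hbelow; simpl; unfold r; destruct_minmax; lra.
    + apply HE; simpl; unfold r; destruct_minmax; split_Rabs; lra.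
Qed.

Lemma I01_connected : connected I01_open (@fullset I01).
Proof.
  intros [U [V [HU [HV [Hc [Hd [[u [_ Uu]] [v [_ Vv]]]]]]]]].
  assert (Hc' : forall x, U x \/ V x) by (intro x; apply Hc; exact I).
  assert (Hd' : forall x, U x -> V x -> False) by (intro x; apply Hd; exact I).
  destruct (Rtotal_order (proj1_sig u) (proj1_sig v)) as [H | [H | H]].
  - eapply (I01_no_separation U V u v); eauto.
  - apply (Hd' u); auto. replace u with v; auto. apply I01_eq; auto.
  - eapply (I01_no_separation V U v u); eauto. intro x; destruct (Hc' x); auto.
Qed.

Lemma connected_convex (B : I01 -> Prop) (x y z : I01) :
  connected I01_open B -> B x -> B y ->
  proj1_sig x <= proj1_sig z <= proj1_sig y -> B z.
Proof.
  intros HB Bx By Hz. apply NNPP; intro Nz. apply HB.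
  assert (Hne : forall t, B t -> proj1_sig t <> proj1_sig z).
  { intros t Bt E. apply Nz. replace z with t; auto. apply I01_eq; auto. }
  exists (fun t => proj1_sig t < proj1_sig z), (fun t => proj1_sig z < proj1_sig t).
  split; [| split; [| split; [| split; [| split]]]].
  - intros t Ht. exists (proj1_sig z - proj1_sig t); split; [lra |].
    intros w Hw. revert Hw; split_Rabs; lra.
  - intros t Ht. exists (proj1_sig t - proj1_sig z); split; [lra |].
    intros w Hw. revert Hw; split_Rabs; lra.
  - intros t Bt. pose proof (Hne t Bt).
    destruct (Rtotal_order (proj1_sig t) (proj1_sig z)) as [? | [? | ?]]; auto; contradiction.
  - intros t _ H1 H2; lra.
  - exists x; split; auto. pose proof (Hne x Bx); lra.
  - exists y; split; auto. pose proof (Hne y By); lra.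
Qed.

Definition Iv (a b : R) : I01 -> Prop := fun t => a <= proj1_sig t <= b.

Lemma rescale_unit (x a b : R) : a < b -> a <= x <= b -> 0 <= (x - a) / (b - a) <= 1.
Proof.
  intros H1 H2. set (w := (x - a) / (b - a)).
  assert (w * (b - a) = x - a) by (unfold w; field; lra). nra.
Qed.

Lemma affine_onto (a b : R) (h : I01 -> I01) :
  a < b -> (forall t, proj1_sig (h t) = a + proj1_sig t * (b - a)) ->
  forall z : I01, a <= proj1_sig z <= b ->
  exists t, h t = z /\ proj1_sig t = (proj1_sig z - a) / (b - a).
Proof.
  intros Hab hv z Hz. pose proof (rescale_unit _ _ _ Hab Hz) as Ht.
  exists (mk _ Ht); split; [| reflexivity].
  apply I01_eq. rewrite hv; simpl. field; lra.
Qed.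

(* Such an affine map sends open sets to relatively open subsets of [a,b]:
   h(U) = [a,b] \cap V with V = [0,a) \cup (b,1] \cup h(U), V open. *)
Lemma affine_image_open (a b : R) (h : I01 -> I01) :
  a < b -> (forall t, proj1_sig (h t) = a + proj1_sig t * (b - a)) ->
  forall U, I01_open U -> exists V, I01_open V /\
    forall y, (Iv a b y /\ V y) <-> exists t, U t /\ h t = y.
Proof.
  intros Hab hv U HU.
  exists (fun y => proj1_sig y < a \/ b < proj1_sig y \/ exists t, U t /\ h t = y).
  split.
  - intros y [Hy | [Hy | [t [Ut <-]]]].
    + exists (a - proj1_sig y); split; [lra |].
      intros z Hz; left. revert Hz; split_Rabs; lra.
    + exists (proj1_sig y - b); split; [lra |].
      intros z Hz; right; left. revert Hz; split_Rabs; lra.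
    + destruct (HU t Ut) as [e [He HE]]. exists (e * (b - a)); split; [nra |].
      intros z Hz. rewrite hv in Hz.
      destruct (Rlt_le_dec (proj1_sig z) a); [left; auto |].
      destruct (Rlt_le_dec b (proj1_sig z)); [right; left; auto |].
      right; right. destruct (affine_onto a b h Hab hv z) as [s [Es Hs]]; [lra |].
      exists s; split; auto. apply HE. rewrite Hs.
      set (w := (proj1_sig z - a) / (b - a)).
      assert (w * (b - a) = proj1_sig z - a) by (unfold w; field; lra).
      revert Hz. split_Rabs; nra.
  - intro y; split.
    + intros [[H1 H2] [H | [H | H]]]; auto; lra.
    + intros [t [Ut <-]]. split.
      * unfold Iv. rewrite hv. pose proof (proj2_sig t); nra.
      * right; right; eauto.
Qed.

Lemma arc_interval (a b : R) : 0 <= a -> a < b -> b <= 1 -> arc I01_open (Iv a b).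
Proof.
  intros Ha Hab Hb.
  assert (Hh : forall t : I01, 0 <= a + proj1_sig t * (b - a) <= 1)
    by (intros [t Ht]; simpl; nra).
  set (h := fun t : I01 => exist (fun x => 0 <= x <= 1) _ (Hh t) : I01).
  assert (hv : forall t, proj1_sig (h t) = a + proj1_sig t * (b - a)) by reflexivity.
  exists h. split; [| split; [| split]].
  - intros V HV x Vx. destruct (HV _ Vx) as [e [He HE]].
    exists (e / (b - a)); split; [apply Rdiv_lt_0_compat; lra |].
    intros y Hy. apply HE. rewrite !hv.
    assert (e / (b - a) * (b - a) = e) by (field; lra).
    revert Hy. split_Rabs; nra.
  - intros s t E. apply I01_eq.
    assert (Ev : proj1_sig (h s) = proj1_sig (h t)) by (rewrite E; auto).
    rewrite !hv in Ev. apply Rmult_eq_reg_r with (b - a); lra.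
  - intro y; split.
    + intros Hy. destruct (affine_onto a b h Hab hv y Hy) as [t [Et _]]. eauto.
    + intros [t <-]. unfold Iv. rewrite hv. pose proof (proj2_sig t); nra.
  - exact (affine_image_open a b h Hab hv).
Qed.

(* Arcs are subcontinua: an arc is a continuous image of the compact,
   connected space [0,1]. *)
Lemma arc_subcontinuum {X : Type} (op : (X -> Prop) -> Prop) (A : X -> Prop) :
  arc op A -> subcontinuum op A.
Proof.
  intros [h [Hh [_ [HA _]]]].
  replace A with (image h fullset).
  2:{ apply pred_ext; intro y; rewrite HA; split.
      - intros [t [_ Ht]]; eauto.
      - intros [t Ht]; exists t; split; [exact I | auto]. }
  split; [| split].
  - assert (H0 : 0 <= 0 <= 1) by lra.
    exists (h (mk 0 H0)), (mk 0 H0); split; [exact I | auto].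
  - apply (compact_image I01_open); auto.
    apply heine_borel. intros x Hx. exfalso; apply Hx; exact I.
  - apply (connected_image I01_open); auto. apply I01_connected.
Qed.

(* Nested closed intervals [a n, b n] have a common point (the supremum of
   the left endpoints). *)
Lemma nested_common_point (a b : nat -> R) :
  Un_growing a -> Un_decreasing b -> (forall n, a n <= b n) ->
  exists x, forall n, a n <= x <= b n.
Proof.
  intros Ha Hb Hab.
  assert (Hcross : forall n m, a n <= b m).
  { intros n m.
    pose proof (growing_prop a (n + m) n Ha ltac:(lia)).
    pose proof (decreasing_prop b m (n + m) Hb ltac:(lia)).
    pose proof (Hab (n + m)%nat). lra. }
  destruct (completeness (fun r => exists n, r = a n)) as [x [Hub Hl]].
  - exists (b O). intros r [n ->]. apply Hcross.
  - exists (a O), O. reflexivity.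
  - exists x. intro n. split; [apply Hub; eauto |].
    apply Hl. intros r [k ->]. apply Hcross.
Qed.

Lemma nested_intervals (K : R -> R -> R -> Prop) (c0 d0 : R) :
  c0 < d0 ->
  (forall c d eps, c0 <= c -> c < d -> d <= d0 -> 0 < eps ->
     exists c' d', c <= c' /\ c' < d' /\ d' <= d /\ d' - c' <= eps /\
       forall s, c' <= s <= d' -> K c d s) ->
  exists x, c0 <= x <= d0 /\
    forall eps, 0 < eps -> exists c d, c <= x <= d /\ d - c <= eps /\ K c d x.
Proof.
  intros Hcd0 Hstep.
  set (admissible := fun cd : R * R => c0 <= fst cd /\ fst cd < snd cd /\ snd cd <= d0).
  set (refines := fun n (cd cd' : R * R) =>
    fst cd <= fst cd' /\ fst cd' < snd cd' /\ snd cd' <= snd cd /\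
    snd cd' - fst cd' <= / INR (S n) /\
    forall s, fst cd' <= s <= snd cd' -> K (fst cd) (snd cd) s).
  assert (Hf : exists f : nat * (R * R) -> R * R,
            forall p, admissible (snd p) -> refines (fst p) (snd p) (f p)).
  { apply (choice (fun p q => admissible (snd p) -> refines (fst p) (snd p) q)).
    intros [n [c d]].
    destruct (classic (admissible (c, d))) as [[Hc [Hcd Hd]] | Hnot].
    - simpl in *.
      assert (Hlen : 0 < / INR (S n)) by (apply Rinv_0_lt_compat, lt_0_INR; lia).
      destruct (Hstep c d _ Hc Hcd Hd Hlen) as [c' [d' Href]].
      exists (c', d'). intros _. exact Href.
    - exists (c, d). intro; contradiction. }
  destruct Hf as [f Hf].
  set (iv := fix iv (n : nat) : R * R :=
         match n with O => (c0, d0) | S n => f (n, iv n) end).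
  assert (Hadm : forall n, admissible (iv n) /\ refines n (iv n) (iv (S n))).
  { induction n as [| n [IHadm IHref]].
    - assert (H0 : admissible (iv O)) by (unfold admissible; simpl; lra).
      split; [exact H0 | exact (Hf (O, iv O) H0)].
    - assert (HS : admissible (iv (S n)))
        by (destruct IHadm as (? & ? & ?), IHref as (? & ? & ? & _);
            unfold admissible; lra).
      split; [exact HS | exact (Hf (S n, iv (S n)) HS)]. }
  destruct (nested_common_point (fun n => fst (iv n)) (fun n => snd (iv n)))
    as [x Hx].
  - intro n. apply (proj2 (Hadm n)).
  - intro n. apply (proj2 (Hadm n)).
  - intro n. destruct (Hadm n) as [(_ & ? & _) _]. lra.
  - exists x. split; [exact (Hx O) |].
    intros eps Heps. destruct (archimed_cor1 eps Heps) as [[| n] [HN HN0]]; [lia |].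
    destruct (Hadm n) as [_ (_ & _ & _ & Hlen & _)].
    destruct (Hadm (S n)) as [_ (_ & _ & _ & _ & HK)].
    exists (fst (iv (S n))), (snd (iv (S n))).
    split; [exact (Hx (S n)) | split; [lra | apply HK, (Hx (S (S n)))]].
Qed.

(* Images of closed sets under a continuous map of [0,1] into a Hausdorff
   space are closed (closed => compact => compact image => closed). *)
Lemma closed_image {Y : Type} (opY : (Y -> Prop) -> Prop)
  (hY : is_topology opY) (hH : Hausdorff opY)
  (g : I01 -> Y) (hg : continuous I01_open opY g) (A : I01 -> Prop) :
  closed I01_open A -> closed opY (image g A).
Proof.
  intro HA. apply compact_closed; auto.
  apply (compact_image I01_open); auto. apply heine_borel; auto.
Qed.

Lemma hereditarily_irreducible_arcwise_increasing {Y : Type} (g : I01 -> Y) :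
  hereditarily_irreducible I01_open g -> arcwise_increasing I01_open g.
Proof. intros Hb A B HA HB Hs. apply Hb; auto using arc_subcontinuum. Qed.

(* (d) -> (c): a proper closed set misses a nonempty open set, which contains
   a point whose fibre is a singleton; its image is missed by g(A). *)
Lemma almost_injective_strongly_irreducible {Y : Type} (g : I01 -> Y) :
  almost_injective I01_open g -> strongly_irreducible I01_open g.
Proof.
  intros Hd A HA [_ [x0 [_ Nx0]]].
  split; [intros y [x [_ <-]]; exists x; split; [exact I | auto] |].
  destruct (Hd _ HA (ex_intro _ x0 Nx0)) as [x [Nx Hx]].
  exists (g x); split; [exists x; split; [exact I | auto] |].
  intros [a [Aa Ea]]. apply Nx. rewrite <- (Hx a Ea); auto.
Qed.

(* Fibre trapping: under a strongly irreducible g every open interval (c,d)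
   contains a point whose whole fibre lies in (c,d).  (Apply strong
   irreducibility to the closed complement of (c,d).) *)
Lemma strongly_irreducible_trapped_point {Y : Type} (g : I01 -> Y) :
  strongly_irreducible I01_open g ->
  forall c d, 0 <= c -> c < d -> d <= 1 ->
  exists t : I01, c < proj1_sig t < d /\
    forall s : I01, g s = g t -> c < proj1_sig s < d.
Proof.
  intros Hs c d Hc Hcd Hd.
  assert (Hm : 0 <= (c + d) / 2 <= 1) by lra.
  destruct (Hs _ (closed_outside_interval c d)) as [_ [y [[t [_ <-]] Ny]]].
  { split; [intros z _; exact I |].
    exists (mk _ Hm); split; [exact I | simpl; lra]. }
  assert (Htrap : forall s : I01, g s = g t -> c < proj1_sig s < d).
  { intros s Es. apply NNPP; intro Ns. apply Ny. exists s; auto. }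
  exists t; split; auto.
Qed.

(* Interval form of fibre trapping: the trapped points fill arbitrarily
   short closed intervals, because {s | g s is not in g([0,1] \ (c,d))} is
   open, g of a closed set being closed. *)
Lemma strongly_irreducible_trapped_interval {Y : Type}
  (opY : (Y -> Prop) -> Prop) (hY : is_topology opY) (hH : Hausdorff opY)
  (g : I01 -> Y) (hg : continuous I01_open opY g) :
  strongly_irreducible I01_open g ->
  forall c d eps, 0 <= c -> c < d -> d <= 1 -> 0 < eps ->
  exists c' d', c <= c' /\ c' < d' /\ d' <= d /\ d' - c' <= eps /\
    forall s y : I01, c' <= proj1_sig s <= d' -> g y = g s -> c < proj1_sig y < d.
Proof.
  intros Hs c d eps Hc Hcd Hd Heps.
  destruct (strongly_irreducible_trapped_point g Hs c d Hc Hcd Hd) as [t [Ht Htrap]].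
  set (outside := fun s : I01 => ~ (c < proj1_sig s < d)).
  assert (Hopen : I01_open (fun s => ~ image g outside (g s)))
    by exact (closed_preimage _ _ g _ hg
                (closed_image opY hY hH g hg _ (closed_outside_interval c d))).
  destruct (interval_in_open _ t c d eps Hopen) as
    (c' & d' & _ & Hc' & Hcd' & Hd' & _ & Hlen & Hin); auto.
  { intros [s [Os Es]]. exact (Os (Htrap s Es)). }
  exists c', d'. split; [auto | split; [auto | split; [auto | split; [auto |]]]].
  intros s y Hsd Ey. apply NNPP; intro Ny.
  apply (Hin s Hsd). exists y; split; auto.
Qed.

Lemma connected_gap (A B : I01 -> Prop) (a0 x : I01) :
  closed I01_open A -> connected I01_open B -> subset A B -> A a0 ->
  B x -> ~ A x ->
  exists c d, 0 <= c /\ c < d /\ d <= 1 /\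
    forall t : I01, c < proj1_sig t < d -> B t /\ ~ A t.
Proof.
  intros HA HB Hsub Aa0 Bx Nx.
  destruct (HA x Nx) as [e [He HE]].
  assert (Hne : proj1_sig a0 <> proj1_sig x).
  { intro E. apply Nx. replace x with a0; auto. apply I01_eq; auto. }
  pose proof (proj2_sig a0); pose proof (proj2_sig x).
  destruct (Rtotal_order (proj1_sig a0) (proj1_sig x)) as [Hlt | [Heq | Hgt]];
    [| contradiction |].
  - exists (Rmax (proj1_sig x - e) (proj1_sig a0)), (proj1_sig x).
    destruct_minmax; (split; [lra | split; [lra | split; [lra |]]]);
      intros t Ht; split.
    all: solve [ apply (connected_convex B a0 x t HB (Hsub _ Aa0) Bx); lra
               | apply HE; split_Rabs; lra ].
  - exists (proj1_sig x), (Rmin (proj1_sig x + e) (proj1_sig a0)).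
    destruct_minmax; (split; [lra | split; [lra | split; [lra |]]]);
      intros t Ht; split.
    all: solve [ apply (connected_convex B x a0 t HB Bx (Hsub _ Aa0)); lra
               | apply HE; split_Rabs; lra ].
Qed.

(* (c) -> (b): for subcontinua A < B a trapped point of an open interval in
   B \ A has its image in g(B) \ g(A). *)
Lemma strongly_irreducible_hereditarily_irreducible {Y : Type} (g : I01 -> Y) :
  strongly_irreducible I01_open g -> hereditarily_irreducible I01_open g.
Proof.
  intros Hs A B [[a0 Aa0] [cA _]] [_ [_ cB]] [Hsub [x [Bx Nx]]].
  split; [intros y [t [At <-]]; exists t; auto |].
  pose proof (compact_closed _ I01_topology I01_Hausdorff A cA) as HAcl.
  destruct (connected_gap A B a0 x HAcl cB Hsub Aa0 Bx Nx)
    as [c [d [Hc [Hcd [Hd Hgap]]]]].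
  destruct (strongly_irreducible_trapped_point g Hs c d Hc Hcd Hd) as [t [Ht Htrap]].
  exists (g t); split.
  - exists t; split; [apply Hgap; auto | auto].
  - intros [a [Aa Ea]]. exact (proj2 (Hgap a (Htrap a Ea)) Aa).
Qed.

(* (c) -> (d): inside any open set, nested trapping intervals shrink to a
   point whose fibre lies in intervals of arbitrarily small length around it,
   hence is a singleton. *)
Lemma strongly_irreducible_almost_injective {Y : Type}
  (opY : (Y -> Prop) -> Prop) (hY : is_topology opY) (hH : Hausdorff opY)
  (g : I01 -> Y) (hg : continuous I01_open opY g) :
  strongly_irreducible I01_open g -> almost_injective I01_open g.
Proof.
  intros Hs U HU [u Uu].
  pose proof (proj2_sig u).
  destruct (interval_in_open U u (-1) 2 1 HU Uu) as
    (c0 & d0 & Hc0 & _ & Hcd0 & _ & Hd0 & _ & HinU); [lra | lra |].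
  set (K := fun c d s => forall t y : I01, proj1_sig t = s -> g y = g t ->
                         c < proj1_sig y < d).
  destruct (nested_intervals K c0 d0 Hcd0) as [x [Hx Hshrink]].
  { intros c d eps Hc Hcd Hd Heps.
    destruct (strongly_irreducible_trapped_interval opY hY hH g hg Hs c d eps)
      as (c' & d' & Hc' & Hcd' & Hd' & Hlen & Htrap); try lra.
    exists c', d'. split; [auto | split; [auto | split; [auto | split; [auto |]]]].
    intros s Hsd t y <-. apply Htrap; auto. }
  assert (Hx01 : 0 <= x <= 1) by lra.
  exists (mk x Hx01); split; [apply HinU; simpl; lra |].
  intros y Ey. apply I01_eq; simpl.
  assert (Hclose : forall eps, 0 < eps -> Rabs (proj1_sig y - x) <= eps).
  { intros eps Heps. destruct (Hshrink eps Heps) as [c [d [Hcx [Hlen HK]]]].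
    pose proof (HK (mk x Hx01) y eq_refl Ey). split_Rabs; lra. }
  destruct (Req_dec (proj1_sig y) x) as [E | Ne]; auto.
  assert (Hpos : 0 < Rabs (proj1_sig y - x)) by (split_Rabs; lra).
  pose proof (Hclose (Rabs (proj1_sig y - x) / 2) ltac:(lra)). lra.
Qed.

Lemma arcwise_increasing_gap {Y : Type} (g : I01 -> Y) :
  arcwise_increasing I01_open g ->
  forall a b a' b', 0 <= a' -> a' <= a -> a < b -> b <= b' -> b' <= 1 ->
  a' < a \/ b < b' ->
  exists t : I01, a' <= proj1_sig t <= b' /\
    forall s : I01, a <= proj1_sig s <= b -> g s <> g t.
Proof.
  intros Ha a b a' b' Ha' Haa Hab Hbb Hb' Hproper.
  assert (Ha'01 : 0 <= a' <= 1) by lra. assert (Hb'01 : 0 <= b' <= 1) by lra.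
  destruct (Ha (Iv a b) (Iv a' b')) as [_ [y [[t [Bt <-]] Ny]]].
  - apply arc_interval; lra.
  - apply arc_interval; lra.
  - split; [intros t [? ?]; split; lra |].
    destruct Hproper.
    + exists (mk a' Ha'01); unfold Iv; simpl; lra.
    + exists (mk b' Hb'01); unfold Iv; simpl; lra.
  - exists t; split; [exact Bt |].
    intros s Hs Es. apply Ny. exists s; auto.
Qed.

(* An arcwise increasing g cannot fold an interval [p,q] back onto [0,p]
   (compare the arcs [0,(p+q)/2] < [0,q]). *)
Lemma arcwise_increasing_no_left_fold {Y : Type} (g : I01 -> Y) :
  arcwise_increasing I01_open g -> forall p q, 0 <= p -> p < q -> q <= 1 ->
  ~ (forall t : I01, p <= proj1_sig t <= q ->
       exists a : I01, proj1_sig a <= p /\ g a = g t).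
Proof.
  intros Ha p q Hp Hpq Hq Hfold.
  destruct (arcwise_increasing_gap g Ha 0 ((p + q) / 2) 0 q) as [t [Ht Hout]];
    try lra.
  assert (Hfar : (p + q) / 2 < proj1_sig t).
  { apply Rnot_le_lt; intro. apply (Hout t); auto. pose proof (proj2_sig t); lra. }
  destruct (Hfold t) as [a [Hap Ea]]; [lra |].
  apply (Hout a); auto. pose proof (proj2_sig a); lra.
Qed.

Lemma arcwise_increasing_no_right_fold {Y : Type} (g : I01 -> Y) :
  arcwise_increasing I01_open g -> forall p q, 0 <= p -> p < q -> q <= 1 ->
  ~ (forall t : I01, p <= proj1_sig t <= q ->
       exists a : I01, q <= proj1_sig a /\ g a = g t).
Proof.
  intros Ha p q Hp Hpq Hq Hfold.
  destruct (arcwise_increasing_gap g Ha ((p + q) / 2) 1 p 1) as [t [Ht Hout]];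
    try lra.
  assert (Hfar : proj1_sig t < (p + q) / 2).
  { apply Rnot_le_lt; intro. apply (Hout t); auto. pose proof (proj2_sig t); lra. }
  destruct (Hfold t) as [a [Hqa Ea]]; [lra |].
  apply (Hout a); auto. pose proof (proj2_sig a); lra.
Qed.

(* If A is closed and proper with g(A) = g([0,1]), take [c,d]
   missing A: each point of [c,d] is folded onto A \cap [0,c] or A \cap [d,1].
   The preimage E of g(A \cap [d,1]) is closed, so either a subinterval of
   (c,d) avoids E (and folds left) or all of (c,d) lies in E (and its middle
   third folds right). *)
Lemma arcwise_increasing_strongly_irreducible {Y : Type}
  (opY : (Y -> Prop) -> Prop) (hY : is_topology opY) (hH : Hausdorff opY)
  (g : I01 -> Y) (hg : continuous I01_open opY g) :
  arcwise_increasing I01_open g -> strongly_irreducible I01_open g.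
Proof.
  intros Ha A HA [_ [x0 [_ Nx0]]].
  split; [intros y [x [_ <-]]; exists x; split; [exact I | auto] |].
  apply NNPP; intro Nall.
  assert (Hall : forall t, exists a, A a /\ g a = g t).
  { intro t. apply NNPP; intro N1. apply Nall. exists (g t).
    split; [exists t; split; [exact I | auto] |].
    intros [a [Aa Ea]]. apply N1; eauto. }
  pose proof (proj2_sig x0).
  destruct (interval_in_open _ x0 (-1) 2 1 HA Nx0) as
    (c & d & Hc & _ & Hcd & _ & Hd & _ & HnotA); [lra | lra |].
  set (E := fun t => image g (fun a => A a /\ d <= proj1_sig a) (g t)).
  assert (HE : closed I01_open E)
    by exact (closed_preimage _ _ g _ hg
                (closed_image opY hY hH g hg _ (closed_right_part A d HA))).
  destruct (classic (exists t : I01, c < proj1_sig t < d /\ ~ E t))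
    as [[t [Ht Nt]] | Hin].
  - destruct (interval_in_open _ t c d 1 HE Nt) as
      (p & q & Hp & Hcp & Hpq & Hqd & Hq & _ & HnotE); auto; [lra |].
    apply (arcwise_increasing_no_left_fold g Ha p q Hp Hpq Hq).
    intros s Hs. destruct (Hall s) as [a [Aa Ea]].
    exists a; split; [| exact Ea].
    destruct (Rle_lt_dec (proj1_sig a) p) as [Hap | Hap]; [exact Hap | exfalso].
    destruct (Rle_lt_dec d (proj1_sig a)) as [Hda | Hda].
    + apply (HnotE s Hs). exists a; auto.
    + apply (HnotA a); auto; lra.
  - set (p := c + (d - c) / 3). set (q := c + 2 * (d - c) / 3).
    apply (arcwise_increasing_no_right_fold g Ha p q); try (unfold p, q; lra).
    intros s Hs.
    assert (HEs : E s).
    { apply NNPP; intro NE. apply Hin. exists s; split; auto. unfold p, q in Hs; lra. }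
    destruct HEs as [a [[Aa Hda] Ea]]. exists a; split; [unfold q; lra | exact Ea].
Qed.

Theorem lemma2p2 (Y : Type) (opY : (Y -> Prop) -> Prop)
  (hY : is_topology opY) (hH : Hausdorff opY)
  (g : I01 -> Y) (hg : continuous I01_open opY g)
  (hsurj : forall y, exists t, g t = y) :
  (arcwise_increasing I01_open g <-> hereditarily_irreducible I01_open g) /\
  (hereditarily_irreducible I01_open g <-> strongly_irreducible I01_open g) /\
  (strongly_irreducible I01_open g <-> almost_injective I01_open g).
Proof.
  pose proof (arcwise_increasing_strongly_irreducible opY hY hH g hg) as a_c.
  pose proof (strongly_irreducible_almost_injective opY hY hH g hg) as c_d.
  pose proof (almost_injective_strongly_irreducible g) as d_c.
  pose proof (strongly_irreducible_hereditarily_irreducible g) as c_b.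
  pose proof (hereditarily_irreducible_arcwise_increasing g) as b_a.
  split; [| split]; split; auto.
Qed.
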